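(* Let $M,K\in\mathbb{R}^{m\times m}$ be symmetric positive definite, $\nu>0$, $\omega>0$, $\theta=1+\nu\omega^2$. Let $\lambda_{\min},\lambda_{\max}$ (resp. $\mu_{\min},\mu_{\max}$) be the smallest and largest eigenvalues of $M$ (resp. $K$). Define for $\alpha>0$ \[ \chi(\alpha)=\max_{\lambda\in\sigma(M)}\frac{\sqrt{\alpha^2+\theta^2\lambda^2}}{\alpha+\theta\lambda},\qquad \vartheta(\alpha)=\max_{\mu\in\sigma(K)}\frac{\sqrt{\alpha^2+\nu\theta\mu^2}}{\alpha+\sqrt{\nu\theta}\,\mu}. \] Then $\alpha_1=\theta\sqrt{\lambda_{\min}\lambda_{\max}}$ minimizes $\chi$ over $\alpha>0$ and $\alpha_2=\sqrt{\nu\theta\,\mu_{\min}\mu_{\max}}$ minimizes $\vartheta$ over $\alpha>0$. Moreover, with $P_\alpha$ the MBAS iteration matrix defined in the context, $\rho(P_\alpha)\le\chi(\alpha)$ and $\rho(P_\alpha)\le\vartheta(\alpha)$ for all $\alpha>0$.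
   Context: $\sigma(\cdot)$ is the spectrum and $\rho(\cdot)$ the spectral radius. With $I$ the $m\times m$ identity, $H_1=\begin{pmatrix} M&0\\0&M\end{pmatrix}$, $H_2=\begin{pmatrix} K&0\\0&K\end{pmatrix}$, $R=\frac{1}{\sqrt{\nu\theta}}\begin{pmatrix} -i\omega\nu I & \sqrt{\nu} I\\ -\sqrt{\nu} I & i\omega\nu I\end{pmatrix}$, the MBAS iteration matrix is $P_\alpha=(\alpha I_{2m}+\sqrt{\nu\theta}H_2)^{-1}(\alpha I_{2m}+\theta RH_1)(\alpha I_{2m}+\theta H_1)^{-1}(\alpha I_{2m}-\sqrt{\nu\theta}RH_2)$. *)

From HB Require Import structures.
From mathcomp Require Import all_boot all_order all_algebra.
From mathcomp Require Import classical_sets reals complex.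
Set Implicit Arguments. Unset Strict Implicit. Unset Printing Implicit Defensive.
Import Order.TTheory GRing.Theory Num.Theory.
Local Open Scope ring_scope.
Local Open Scope classical_set_scope.

Definition spectrum (F : fieldType) (n : nat) (A : 'M[F]_n) : set F :=
  [set a | eigenvalue A a].

Definition sym_posdef (R : realType) (m : nat) (A : 'M[R]_m) : Prop :=
  A^T = A /\ (forall v : 'rV[R]_m, v != 0 -> 0 < (v *m A *m v^T) 0 0).

(* spectral radius rho(A) = max_{z in sigma(A)} |z| for a complex matrix
   (a finite set, so its supremum is its maximum) *)
Definition spectral_radius (R : realType) (n : nat) (A : 'M[R[i]]_n) : R :=
  sup [set ComplexField.Normc.normc z | z in spectrum A].

Definition theta (R : realType) (nu omega : R) : R := 1 + nu * omega ^+ 2.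

Definition chi (R : realType) (m : nat) (M : 'M[R]_m) (th alpha : R) : R :=
  sup [set Num.sqrt (alpha ^+ 2 + th ^+ 2 * l ^+ 2) / (alpha + th * l)
      | l in spectrum M].

Definition vartheta (R : realType) (m : nat) (K : 'M[R]_m) (nu th alpha : R) : R :=
  sup [set Num.sqrt (alpha ^+ 2 + nu * th * mu ^+ 2) / (alpha + Num.sqrt (nu * th) * mu)
      | mu in spectrum K].

Local Open Scope complex_scope.

Definition cmx (R : realType) (m : nat) (A : 'M[R]_m) : 'M[R[i]]_m :=
  map_mx (fun x : R => x%:C) A.

Definition H1 (R : realType) (m : nat) (M : 'M[R]_m) : 'M[R[i]]_(m + m) :=
  block_mx (cmx M) 0 0 (cmx M).
Definition H2 (R : realType) (m : nat) (K : 'M[R]_m) : 'M[R[i]]_(m + m) :=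
  block_mx (cmx K) 0 0 (cmx K).

Definition Rmx (R : realType) (m : nat) (nu omega : R) : 'M[R[i]]_(m + m) :=
  ((Num.sqrt (nu * theta nu omega))^-1)%:C *:
    block_mx ((- ('i * (omega * nu)%:C))%:M) ((Num.sqrt nu)%:C%:M)
             ((- (Num.sqrt nu)%:C)%:M) (('i * (omega * nu)%:C)%:M).

Definition P_MBAS (R : realType) (m : nat) (M K : 'M[R]_m) (nu omega alpha : R)
  : 'M[R[i]]_(m + m) :=
  let th := theta nu omega in
  let s := Num.sqrt (nu * th) in
  let I2 : 'M[R[i]]_(m + m) := alpha%:C%:M in
  invmx (I2 + s%:C *: H2 K) *m (I2 + th%:C *: (Rmx m nu omega *m H1 M))
    *m invmx (I2 + th%:C *: H1 M) *m (I2 - s%:C *: (Rmx m nu omega *m H2 K)).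

From HB Require Import structures.
From mathcomp Require Import all_boot all_order all_algebra.
From mathcomp Require Import classical_sets reals complex.
From mathcomp Require Import ring lra.
Import Order.TTheory GRing.Theory Num.Theory.
Local Open Scope ring_scope.
Local Open Scope classical_set_scope.
Set Implicit Arguments. Unset Strict Implicit.

(* With [hyp_ratio a b = sqrt (a^2 + b^2) / (a + b)], chi and vartheta are suprema
   of [hyp_ratio a (k l)] over a spectrum.  For fixed [a], [hyp_ratio a] is
   quasi-convex with its minimum at [a], so each supremum is attained at the extreme
   eigenvalues, and the larger of the two endpoint values is smallest when [a] is
   their geometric mean, where the two values coincide.

   For the spectral radius, write [P_alpha = A^-1 B D^-1 E].  The matrix [R] is
   skew-Hermitian, squares to [-1] and commutes with the Hermitian [H1] and [H2];
   hence [B B^* = alpha^2 + theta^2 H1^2] whereas [D D^* = (alpha + theta H1)^2], and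
   the spectral theorem turns the scalar bound defining chi into [|x B| <= chi |x D|]
   for every row vector [x]; likewise [|x E| <= vartheta |x A|].  Following an
   eigenvector through the four factors gives [|z| <= chi vartheta], which is at most
   each factor since both lie in [0, 1]. *)

Section HypRatio.
Variable R : rcfType.
Implicit Types a b c k : R.

Definition hyp_ratio a b := Num.sqrt (a ^+ 2 + b ^+ 2) / (a + b).

Lemma hyp_ratioC a b : hyp_ratio a b = hyp_ratio b a.
Proof. by rewrite /hyp_ratio addrC [b + a]addrC. Qed.

Lemma hyp_ratio_ge0 a b : 0 < a -> 0 < b -> 0 <= hyp_ratio a b.
Proof. by move=> a_gt0 b_gt0; rewrite divr_ge0 ?sqrtr_ge0 // ltW // addr_gt0. Qed.

Lemma sqr_hyp_ratio a b : 0 < a -> 0 < b ->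
  hyp_ratio a b ^+ 2 = (a ^+ 2 + b ^+ 2) / (a + b) ^+ 2.
Proof. by move=> a_gt0 b_gt0; rewrite exprMn sqr_sqrtr ?exprVn // addr_ge0 ?sqr_ge0. Qed.

Lemma hyp_ratio_le_sqr a b k : 0 < a -> 0 < b -> 0 <= k ->
  (hyp_ratio a b <= k) = (a ^+ 2 + b ^+ 2 <= k ^+ 2 * (a + b) ^+ 2).
Proof.
move=> a_gt0 b_gt0 k_ge0.
rewrite -ler_sqr ?nnegrE ?hyp_ratio_ge0 // sqr_hyp_ratio //.
by rewrite ler_pdivrMr ?exprn_gt0 ?addr_gt0.
Qed.

Lemma hyp_ratio_le1 a b : 0 < a -> 0 < b -> hyp_ratio a b <= 1.
Proof. by move=> a_gt0 b_gt0; rewrite hyp_ratio_le_sqr // expr1n mul1r; nra. Qed.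

(* For fixed [c], [hyp_ratio c] decreases on [(0, c]] and increases on [[c, +oo)]. *)
Lemma hyp_ratio_le c x y : 0 < c -> 0 < x -> 0 < y ->
  0 <= (x - y) * (c ^+ 2 - x * y) -> hyp_ratio c x <= hyp_ratio c y.
Proof.
move=> c_gt0 x_gt0 y_gt0 sign_ge0.
rewrite hyp_ratio_le_sqr ?hyp_ratio_ge0 // sqr_hyp_ratio //.
rewrite mulrAC ler_pdivlMr ?exprn_gt0 ?addr_gt0 // -subr_ge0.
have -> : (c ^+ 2 + y ^+ 2) * (c + x) ^+ 2 - (c ^+ 2 + x ^+ 2) * (c + y) ^+ 2
    = 2 * c * ((x - y) * (c ^+ 2 - x * y)) by ring.
by rewrite mulr_ge0 // mulr_ge0 // ltW.
Qed.

Lemma hyp_ratio_le_max c x1 x2 x : 0 < c -> 0 < x1 -> x1 <= x <= x2 ->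
  hyp_ratio c x <= Num.max (hyp_ratio c x1) (hyp_ratio c x2).
Proof.
move=> c_gt0 x1_gt0 /andP[x1x xx2].
have x_gt0 := lt_le_trans x1_gt0 x1x; have x2_gt0 := lt_le_trans x_gt0 xx2.
rewrite le_max; have [xc|cx] := lerP x c; apply/orP; [left|right];
    apply: hyp_ratio_le => //.
  by rewrite mulr_ge0 ?subr_ge0 //; nra.
by rewrite mulr_le0 ?subr_le0 //; nra.
Qed.

Lemma hyp_ratio_max_geomean x1 x2 a : 0 < x1 -> x1 <= x2 -> 0 < a ->
  Num.max (hyp_ratio (Num.sqrt (x1 * x2)) x1) (hyp_ratio (Num.sqrt (x1 * x2)) x2)
  <= Num.max (hyp_ratio a x1) (hyp_ratio a x2).
Proof.
move=> x1_gt0 x1_le_x2 a_gt0; set c := Num.sqrt _; have x2_gt0 := lt_le_trans x1_gt0 x1_le_x2.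
have c_gt0 : 0 < c by rewrite sqrtr_gt0 mulr_gt0.
have c_sqr : c ^+ 2 = x1 * x2 by rewrite sqr_sqrtr // ltW // mulr_gt0.
have c_eq : hyp_ratio c x1 = hyp_ratio c x2.
  by apply/le_anti; rewrite !hyp_ratio_le // c_sqr ?[x2 * x1]mulrC subrr mulr0.
rewrite -c_eq maxxx le_max [hyp_ratio a _]hyp_ratioC [hyp_ratio a x2]hyp_ratioC.
have [ac|ca] := lerP a c; apply/orP; [right; rewrite c_eq|left];
  rewrite hyp_ratioC; apply: hyp_ratio_le => //.
  by rewrite mulr_ge0 ?subr_ge0 //; nra.
by rewrite mulr_le0 ?subr_le0 ?ltW //; nra.
Qed.

End HypRatio.

Section HypRatioSup.
Variables (R : realType) (S : set R) (k : R).
Hypotheses (k_gt0 : 0 < k) (S_gt0 : forall x, S x -> 0 < x).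

Definition hyp_ratio_sup (a : R) := sup [set hyp_ratio a (k * x) | x in S].

Let hyp_ratio_sup_ub a : 0 < a -> ubound [set hyp_ratio a (k * x) | x in S] 1.
Proof. by move=> a_gt0 _ [x Sx <-]; rewrite hyp_ratio_le1 // mulr_gt0 // S_gt0. Qed.

Lemma hyp_ratio_le_sup a x : 0 < a -> S x -> hyp_ratio a (k * x) <= hyp_ratio_sup a.
Proof.
by move=> a_gt0 Sx; apply: ub_le_sup; [exists 1; exact: hyp_ratio_sup_ub | exists x].
Qed.

Lemma hyp_ratio_sup_le1 a : 0 < a -> S !=set0 -> hyp_ratio_sup a <= 1.
Proof.
by move=> a_gt0 [x Sx]; apply: ge_sup (hyp_ratio_sup_ub a_gt0); exists (hyp_ratio a (k * x)), x.
Qed.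

Lemma hyp_ratio_sup_ge0 a : 0 < a -> S !=set0 -> 0 <= hyp_ratio_sup a.
Proof.
move=> a_gt0 [x Sx]; apply: le_trans (hyp_ratio_le_sup a_gt0 Sx).
by rewrite hyp_ratio_ge0 // mulr_gt0 // S_gt0.
Qed.

Section Endpoints.
Variables x1 x2 : R.
Hypotheses (S1 : S x1) (S2 : S x2) (S12 : forall x, S x -> x1 <= x <= x2).

Lemma hyp_ratio_sup_endpoints a : 0 < a ->
  hyp_ratio_sup a = Num.max (hyp_ratio a (k * x1)) (hyp_ratio a (k * x2)).
Proof.
move=> a_gt0; apply/le_anti; rewrite ge_max !hyp_ratio_le_sup // !andbT.
apply: ge_sup; first by exists (hyp_ratio a (k * x1)), x1.
move=> _ [x Sx <-]; have /andP[x1x xx2] := S12 Sx.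
apply: hyp_ratio_le_max => //; first by rewrite mulr_gt0 // S_gt0.
by rewrite !ler_pM2l // x1x xx2.
Qed.

Lemma hyp_ratio_sup_geomean a : 0 < a ->
  hyp_ratio_sup (Num.sqrt (k * x1 * (k * x2))) <= hyp_ratio_sup a.
Proof.
move=> a_gt0; have kx1_gt0 : 0 < k * x1 by rewrite mulr_gt0 // S_gt0.
have kx12 : k * x1 <= k * x2 by have /andP[] := S12 S2; rewrite ler_pM2l.
rewrite !hyp_ratio_sup_endpoints // ?hyp_ratio_max_geomean //.
by rewrite sqrtr_gt0 mulr_gt0 // (lt_le_trans kx1_gt0).
Qed.

End Endpoints.
End HypRatioSup.

Lemma spectrum_posdef_gt0 (R : realType) m (M : 'M[R]_m) r :
  sym_posdef M -> spectrum M r -> 0 < r.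
Proof.
move=> [_ M_pos] /eigenvalueP [v vM v_neq0].
have := M_pos v v_neq0; rewrite vM -scalemxAl mxE.
have vv_ge0 : 0 <= (v *m v^T) 0 0.
  by rewrite mxE sumr_ge0 // => j _; rewrite !mxE -expr2 sqr_ge0.
by apply: contraTT; rewrite -!leNgt => r_le0; rewrite mulr_le0_ge0.
Qed.

Lemma spectrum_dim_gt0 (F : fieldType) m (M : 'M[F]_m) r : spectrum M r -> (0 < m)%N.
Proof. by case: m M => // M /eigenvalueP [v _]; rewrite (thinmx0 v) eqxx. Qed.

Lemma chiE (R : realType) m (M : 'M[R]_m) th a :
  chi M th a = hyp_ratio_sup (spectrum M) th a.
Proof. by rewrite /chi; congr sup; apply: eq_imagel => l _; rewrite /hyp_ratio exprMn. Qed.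

Lemma varthetaE (R : realType) m (K : 'M[R]_m) nu th a : 0 <= nu * th ->
  vartheta K nu th a = hyp_ratio_sup (spectrum K) (Num.sqrt (nu * th)) a.
Proof.
move=> nuth_ge0; rewrite /vartheta; congr sup; apply: eq_imagel => mu _.
by rewrite /hyp_ratio exprMn sqr_sqrtr.
Qed.

Section HermitianForms.
Variable C : numClosedFieldType.
Local Open Scope sesquilinear_scope.

Definition qform n (x : 'rV[C]_n) (X : 'M[C]_n) : C := (x *m X *m x^t*) 0 0.

Definition psdmx n (X : 'M[C]_n) := forall x, 0 <= qform x X.

Definition poly2mx n (G : 'M[C]_n) (p0 p1 p2 : C) : 'M[C]_n :=
  p0%:M + p1 *: G + p2 *: (G *m G).

Lemma dotmx_mulmx n (x : 'rV[C]_n) (A : 'M[C]_n) :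
  dotmx (x *m A) (x *m A) = qform x (A *m A^t*).
Proof. by rewrite dotmxE trmx_mul map_mxM /qform !mulmxA. Qed.

Lemma qform_poly2mx n (x : 'rV[C]_n) G p0 p1 p2 : qform x (poly2mx G p0 p1 p2)
  = p0 * dotmx x x + p1 * qform x G + p2 * qform x (G *m G).
Proof.
rewrite /qform /poly2mx dotmxE !mulmxDr !mulmxDl mul_mx_scalar.
by rewrite -!scalemxAr -!scalemxAl !mxE.
Qed.

Lemma poly2mx_conj n (U X : 'M[C]_n) p0 p1 p2 : U \in unitmx ->
  poly2mx (invmx U *m X *m U) p0 p1 p2 = invmx U *m poly2mx X p0 p1 p2 *m U.
Proof.
move=> U_unit; rewrite /poly2mx !mulmxDr !mulmxDl -!scalemxAr -!scalemxAl.
rewrite mul_mx_scalar -scalemxAl mulVmx // scalemx1.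
by rewrite !mulmxA mulmxK.
Qed.

Lemma poly2mx_diag n (d : 'rV[C]_n) p0 p1 p2 : poly2mx (diag_mx d) p0 p1 p2
  = diag_mx (\row_j (p0 + p1 * d 0 j + p2 * d 0 j ^+ 2)).
Proof.
apply/matrixP => i j; rewrite /poly2mx mulmx_diag !mxE.
by case: eqP => [->|_]; rewrite ?mulr1n ?mulr0n ?expr2 ?mulr0 ?addr0.
Qed.

Lemma qform_diag_ge0 n (w e : 'rV[C]_n) :
  (forall j, 0 <= e 0 j) -> 0 <= qform w (diag_mx e).
Proof.
move=> e_ge0; rewrite /qform mul_mx_diag mxE sumr_ge0 // => j _.
by rewrite !mxE mulrAC mulr_ge0 ?mul_conjC_ge0.
Qed.

Lemma hermitian_spectral_eigenvalue n (G : 'M[C]_n) j : G \is hermsymmx ->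
  eigenvalue G (spectral_diag G 0 j).
Proof.
move=> /hermitian_normalmx /orthomx_spectralP G_eq.
have U_unit := spectral_unit G; set U := spectralmx G in G_eq U_unit *.
set d := spectral_diag G in G_eq *.
apply/eigenvalueP; exists (row j U).
  rewrite -row_mul G_eq !mulmxA mulmxV // mul1mx.
  by rewrite row_mul row_diag_mx -scalemxAl -rowE.
apply/eqP => /(congr1 (mulmx^~ (invmx U))); rewrite -row_mul mulmxV // mul0mx.
by move=> /rowP /(_ j); rewrite !mxE eqxx; apply/eqP; rewrite oner_eq0.
Qed.

Lemma psdmx_poly2mx n (G : 'M[C]_n) p0 p1 p2 : G \is hermsymmx ->
  (forall z, z \is Num.real -> eigenvalue G z -> 0 <= p0 + p1 * z + p2 * z ^+ 2) ->
  psdmx (poly2mx G p0 p1 p2).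
Proof.
move=> G_herm p_ge0 x.
have /hermitian_normalmx /orthomx_spectralP G_eq := G_herm.
have d_real := hermitian_spectral_diag_real G_herm.
have d_eig j := hermitian_spectral_eigenvalue j G_herm.
have U_unitary := spectral_unitarymx G.
set U := spectralmx G in G_eq U_unitary; set d := spectral_diag G in G_eq d_real d_eig.
rewrite G_eq poly2mx_conj ?unitarymx_unit // invmx_unitary //.
have -> : qform x (U^t* *m poly2mx (diag_mx d) p0 p1 p2 *m U)
    = qform (x *m U^t*) (poly2mx (diag_mx d) p0 p1 p2).
  by rewrite /qform trmx_mul map_mxM trmxCK !mulmxA.
rewrite poly2mx_diag; apply: qform_diag_ge0 => j; rewrite mxE.
by apply: p_ge0; [exact: (mxOverP d_real) | exact: d_eig].
Qed.

Lemma comm_mx_invmx n (A B : 'M[C]_n) : B \in unitmx -> comm_mx A B -> comm_mx A (invmx B).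
Proof. by move=> B_unit AB; rewrite /comm_mx -{1}[A](mulKmx B_unit) -AB -mulmxA mulmxK. Qed.

(* Eigenvectors are rows: [u := v A^-1] satisfies [u B D^-1 E A^-1 = z u], and the
   commutations let [B] and [E] act before the inverses, where the norm bounds apply. *)
Lemma eigenvalue_chain_le n (A B D E : 'M[C]_n) (c1 c2 z : C) :
  A \in unitmx -> D \in unitmx -> comm_mx B D -> comm_mx E A -> 0 <= c2 ->
  (forall x, dotmx (x *m B) (x *m B) <= c1 * dotmx (x *m D) (x *m D)) ->
  (forall x, dotmx (x *m E) (x *m E) <= c2 * dotmx (x *m A) (x *m A)) ->
  eigenvalue (invmx A *m B *m invmx D *m E) z -> z * z^* <= c1 * c2.
Proof.
move=> A_unit D_unit BD EA c2_ge0 B_le E_le /eigenvalueP [v vP v_neq0].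
set u := v *m invmx A; set p := u *m B *m invmx D.
have u_gt0 : 0 < dotmx u u.
  rewrite dnorm_gt0; apply: contra v_neq0 => /eqP u0.
  by rewrite -(mulmxKV A_unit v) -/u u0 mul0mx.
have p_le : dotmx p p <= c1 * dotmx u u.
  have -> : p = u *m invmx D *m B by rewrite /p -!mulmxA (comm_mx_invmx D_unit BD).
  by have := B_le (u *m invmx D); rewrite mulmxKV.
have zu_le : dotmx (z *: u) (z *: u) <= c2 * dotmx p p.
  have -> : z *: u = p *m invmx A *m E.
    by rewrite /p /u scalemxAl -vP -!mulmxA (comm_mx_invmx A_unit EA) !mulmxA.
  by have := E_le (p *m invmx A); rewrite mulmxKV.
have dotmxZ : dotmx (z *: u) (z *: u) = z * z^* * dotmx u u.
  rewrite !dotmxE linearZ map_mxZ /= -scalemxAr -scalemxAl !mxE.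
  by rewrite mulrA [z^* * z]mulrC.
rewrite -(ler_pM2r u_gt0) -dotmxZ (le_trans zu_le) //.
by rewrite [c1 * c2]mulrC -mulrA ler_wpM2l.
Qed.

End HermitianForms.

Section ScalarPlusMatrices.
Variables (C : numClosedFieldType) (n : nat) (G Q : 'M[C]_n).
Local Open Scope sesquilinear_scope.
Hypotheses (G_adj : G^t* = G) (Q_adj : Q^t* = - Q) (QQ : Q *m Q = - 1%:M)
  (QG : comm_mx Q G).

Lemma adj_scalar_plus (a e : C) (X : 'M[C]_n) : a \is Num.real -> e \is Num.real ->
  (a%:M + e *: X)^t* = a%:M + e *: X^t*.
Proof.
move=> a_real e_real; rewrite linearD linearZ /= tr_scalar_mx.
by rewrite map_mxD map_mxZ map_scalar_mx /= !conj_Creal.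
Qed.

Lemma mulmx_adj_hermitian (a f : C) : a \is Num.real -> f \is Num.real ->
  (a%:M + f *: G) *m (a%:M + f *: G)^t* = poly2mx G (a ^+ 2) (2 * a * f) (f ^+ 2).
Proof.
move=> a_real f_real; rewrite adj_scalar_plus // G_adj /poly2mx.
rewrite mulmxDl !mulmxDr mul_scalar_mx mul_mx_scalar scale_scalar_mx.
rewrite -!scalemxAl -!scalemxAr mul_scalar_mx !scalerA -expr2.
have -> : (2 * a * f) *: G = (f * a) *: G + (a * f) *: G.
  by rewrite -scalerDl; congr (_ *: _); ring.
by rewrite -expr2 !addrA.
Qed.

Lemma mulmx_adj_skew (a e : C) : a \is Num.real -> e \is Num.real ->
  (a%:M + e *: (Q *m G)) *m (a%:M + e *: (Q *m G))^t* = poly2mx G (a ^+ 2) 0 (e ^+ 2).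
Proof.
move=> a_real e_real.
have QGQG : Q *m G *m (Q *m G) = - (G *m G).
  by rewrite mulmxA -[Q *m G *m Q]mulmxA -QG mulmxA QQ !mulNmx mul1mx.
rewrite adj_scalar_plus // trmx_mul map_mxM G_adj Q_adj mulmxN -QG scalerN.
rewrite mulmxDl !mulmxDr mul_scalar_mx mul_mx_scalar scale_scalar_mx !mulmxN.
rewrite mul_scalar_mx -scalemxAl -scalemxAr QGQG !scalerN !scalerA opprK.
by rewrite /poly2mx scale0r addr0 addrA subrK -!expr2.
Qed.

Lemma comm_scalar_plus (a e f : C) :
  comm_mx (a%:M + e *: (Q *m G)) (a%:M + f *: G).
Proof.
have QGG : comm_mx (Q *m G) G by rewrite /comm_mx [RHS]mulmxA -QG.
rewrite /comm_mx !mulmxDl !mulmxDr !mul_scalar_mx !mul_mx_scalar.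
rewrite -!scalemxAl -!scalemxAr QGG !scalerA [e * f]mulrC.
by rewrite !addrA [_ + (a * f) *: G + _]addrAC.
Qed.

Lemma scalar_plus_unitmx (a f : C) : 0 < a -> f \is Num.real ->
  psdmx (poly2mx G 0 (2 * a * f) (f ^+ 2)) -> (a%:M + f *: G) \in unitmx.
Proof.
move=> a_gt0 f_real G_psd; have a_real := gtr0_real a_gt0.
rewrite -row_free_unit -kermx_eq0; apply/rowV0P => v /sub_kermxP vA0.
have := G_psd v; rewrite qform_poly2mx mul0r add0r => G_ge0.
have := dotmx_mulmx v (a%:M + f *: G).
rewrite vA0 mulmx_adj_hermitian // qform_poly2mx -addrA dotmxE mul0mx mxE.
have av_ge0 : 0 <= a ^+ 2 * dotmx v v by rewrite mulr_ge0 ?exprn_ge0 ?dnorm_ge0 ?ltW.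
move/esym/eqP; rewrite paddr_eq0 // => /andP[+ _].
by rewrite mulf_eq0 sqrf_eq0 (gt_eqF a_gt0) dnorm_eq0 => /eqP.
Qed.

Lemma dotmx_skew_le (a e f c : C) (x : 'rV[C]_n) :
  a \is Num.real -> e \is Num.real -> f \is Num.real -> e ^+ 2 = f ^+ 2 ->
  psdmx (poly2mx G ((c - 1) * a ^+ 2) (2 * c * a * f) ((c - 1) * f ^+ 2)) ->
  dotmx (x *m (a%:M + e *: (Q *m G))) (x *m (a%:M + e *: (Q *m G)))
  <= c * dotmx (x *m (a%:M + f *: G)) (x *m (a%:M + f *: G)).
Proof.
move=> a_real e_real f_real ef G_psd.
rewrite !dotmx_mulmx mulmx_adj_skew // mulmx_adj_hermitian // !qform_poly2mx ef.
rewrite -subr_ge0; apply: (le_trans (G_psd x)); rewrite qform_poly2mx le_eqVlt.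
by apply/orP; left; apply/eqP; ring.
Qed.

End ScalarPlusMatrices.

Lemma eigenvalue_block_diag (F : fieldType) m (A : 'M[F]_m) z :
  eigenvalue (block_mx A 0 0 A) z -> eigenvalue A z.
Proof.
move=> /eigenvalueP [v]; rewrite -[v]hsubmxK mul_row_block !mulmx0 addr0 add0r.
rewrite scale_row_mx => /eq_row_mx [v1A v2A]; rewrite -row_mx0 => v_neq0.
apply/eigenvalueP; have [v1_0|v1_neq0] := eqVneq (lsubmx v) 0; last by exists (lsubmx v).
by exists (rsubmx v) => //; apply: contraNneq v_neq0 => v2_0; rewrite v1_0 v2_0.
Qed.

Section ComplexifiedSymmetric.
Variable R : realType.
Local Notation C := R[i].
Local Open Scope sesquilinear_scope.

Lemma real_complex_real (x : R) : x%:C%C \is Num.real.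
Proof. by apply/complex_realP; exists x. Qed.

Lemma adj_cmx m (M : 'M[R]_m) : M^T = M -> (cmx M)^t* = cmx M.
Proof.
move=> M_sym; apply/matrixP => i j; rewrite !mxE conj_Creal ?real_complex_real //.
by rewrite -{1}M_sym mxE.
Qed.

Lemma adj_block_diag m (A : 'M[C]_m) : A^t* = A -> (block_mx A 0 0 A)^t* = block_mx A 0 0 A.
Proof. by move=> A_adj; rewrite tr_block_mx map_block_mx !trmx0 !map_mx0 A_adj. Qed.

Lemma eigenvalue_cmx m (M : 'M[R]_m) (r : R) : eigenvalue (cmx M) r%:C%C -> spectrum M r.
Proof. by rewrite /spectrum /= !eigenvalue_root_char -map_char_poly fmorph_root. Qed.

Lemma psdmx_poly2mx_cmx m (M : 'M[R]_m) (p0 p1 p2 : R) : M^T = M ->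
  (forall r, spectrum M r -> 0 <= p0 + p1 * r + p2 * r ^+ 2) ->
  psdmx (poly2mx (block_mx (cmx M) 0 0 (cmx M)) p0%:C%C p1%:C%C p2%:C%C).
Proof.
move=> M_sym p_ge0; apply: psdmx_poly2mx => [|z z_real /eigenvalue_block_diag].
  by apply/is_hermitianmxP; rewrite expr0 scale1r adj_block_diag ?adj_cmx.
rewrite -(RRe_real z_real) => /eigenvalue_cmx /p_ge0.
by rewrite -ler0c !rmorphD !rmorphM; apply.
Qed.

Lemma normc_ge0 (z : C) : 0 <= ComplexField.Normc.normc z.
Proof. by case: z => a b; rewrite /= sqrtr_ge0. Qed.

End ComplexifiedSymmetric.

Section SkewFactor.
Variable R : realType.
Local Notation C := R[i].
Local Open Scope sesquilinear_scope.

Lemma theta_gt0 (nu omega : R) : 0 < nu -> 0 < theta nu omega.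
Proof. by move=> nu_gt0; rewrite /theta; nra. Qed.

Lemma Rmx_adj m (nu omega : R) : (Rmx m nu omega)^t* = - Rmx m nu omega.
Proof.
rewrite /Rmx linearZ /= map_mxZ /= conj_Creal ?real_complex_real //.
rewrite tr_block_mx map_block_mx !tr_scalar_mx !map_scalar_mx /=.
rewrite -scalerN opp_block_mx -!raddfN /= !rmorphN !rmorphM /=.
have conj_i : ('i%C : C)^* = - 'i%C by rewrite complexiE conjCi.
by rewrite conj_i !conj_Creal ?real_complex_real // raddfN /= !mulNr !opprK.
Qed.

Lemma Rmx_sqr m (nu omega : R) : 0 < nu -> Rmx m nu omega *m Rmx m nu omega = - 1%:M.
Proof.
move=> nu_gt0; have th_gt0 := theta_gt0 omega nu_gt0.
set k : C := (Num.sqrt (nu * theta nu omega))^-1%:C%C.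
set W : C := (omega * nu)%:C%C; set S : C := (Num.sqrt nu)%:C%C.
have kWS : k * k * (W * W + S * S) = 1.
  rewrite /k /W /S -!rmorphM -rmorphD -rmorphM -(rmorph1 (real_complex R)).
  congr (_ %:C%C); rewrite -expr2 exprVn sqr_sqrtr ?mulr_ge0 ?ltW //.
  rewrite -[Num.sqrt nu * _]expr2 sqr_sqrtr ?ltW //.
  by move: th_gt0; rewrite /theta => th_gt0; field; rewrite !gt_eqF.
rewrite /Rmx -scalemxAl -scalemxAr scalerA mulmx_block -!scalar_mxM -!raddfD.
rewrite (scalar_mx_block m m) scale_block_mx !scale_scalar_mx -/k -/W -/S.
rewrite opp_block_mx !oppr0.
have -> : - 1%:M = (-1 : C)%:M :> 'M_m by rewrite raddfN.
have -> : 0 = (0 : C)%:M :> 'M_m by rewrite raddf0.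
(* [Rmx] and [sqr_i] elaborate ['i] through different instance paths. *)
match goal with |- context [- (?i * W)] => set I := i end.
have II : I * I = -1 by rewrite -expr2; exact: sqr_i.
have diag : k * k * (I * I * (W * W) - S * S) = -1.
  by rewrite II mulN1r -opprD mulrN kWS.
by congr (block_mx _%:M _%:M _%:M _%:M); rewrite -?diag; ring.
Qed.

Lemma comm_Rmx_block_diag m (nu omega : R) (A : 'M[C]_m) :
  comm_mx (Rmx m nu omega) (block_mx A 0 0 A).
Proof.
rewrite /comm_mx /Rmx -scalemxAl -scalemxAr !mulmx_block !mulmx0 !mul0mx !addr0 !add0r.
by rewrite !mul_scalar_mx !mul_mx_scalar.
Qed.

End SkewFactor.

Section BlockDiagBounds.
Variables (R : realType) (m : nat).
Local Notation C := R[i].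
Local Notation bdiag M := (block_mx (cmx M) 0 0 (cmx M)).
Local Open Scope sesquilinear_scope.

Lemma scalar_plus_bdiag_unitmx (M : 'M[R]_m) (a k : R) :
  sym_posdef M -> 0 < a -> 0 < k -> ((a%:C%C)%:M + k%:C%C *: bdiag M) \in unitmx.
Proof.
move=> M_pd a_gt0 k_gt0.
apply: scalar_plus_unitmx; rewrite ?ltcR ?real_complex_real //.
  by rewrite adj_block_diag ?adj_cmx ?M_pd.1.
have := @psdmx_poly2mx_cmx _ _ M 0 (2 * a * k) (k ^+ 2) M_pd.1.
rewrite rmorph0 rmorphXn !rmorphM rmorph_nat; apply=> r /(spectrum_posdef_gt0 M_pd) r_gt0.
by rewrite add0r addr_ge0 // ?mulr_ge0 ?sqr_ge0 ?ltW // !mulr_gt0.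
Qed.

Lemma dotmx_skew_bdiag_le (M : 'M[R]_m) (Q : 'M[C]_(m + m)) (a k e c : R) x :
  sym_posdef M -> Q^t* = - Q -> Q *m Q = - 1%:M -> comm_mx Q (bdiag M) ->
  0 < a -> 0 < k -> 0 <= c -> e ^+ 2 = k ^+ 2 ->
  (forall l, spectrum M l -> hyp_ratio a (k * l) <= c) ->
  dotmx (x *m ((a%:C%C)%:M + e%:C%C *: (Q *m bdiag M)))
        (x *m ((a%:C%C)%:M + e%:C%C *: (Q *m bdiag M)))
  <= (c ^+ 2)%:C%C * dotmx (x *m ((a%:C%C)%:M + k%:C%C *: bdiag M))
                           (x *m ((a%:C%C)%:M + k%:C%C *: bdiag M)).
Proof.
move=> M_pd Q_adj QQ QM a_gt0 k_gt0 c_ge0 ek ratio_le.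
apply: dotmx_skew_le; rewrite ?real_complex_real -?rmorphXn ?ek //.
  by rewrite adj_block_diag ?adj_cmx ?M_pd.1.
have := @psdmx_poly2mx_cmx _ _ M ((c ^+ 2 - 1) * a ^+ 2) (2 * c ^+ 2 * a * k)
  ((c ^+ 2 - 1) * k ^+ 2) M_pd.1.
rewrite !(rmorphM, rmorphB, rmorphXn, rmorph1, rmorph_nat); apply=> r Mr.
have r_gt0 := spectrum_posdef_gt0 M_pd Mr.
have := ratio_le r Mr; rewrite hyp_ratio_le_sqr ?mulr_gt0 //; nra.
Qed.

End BlockDiagBounds.

Section MBASSpectralRadius.
Variables (R : realType) (m : nat) (M K : 'M[R]_m) (nu omega alpha c1 c2 : R).
Local Notation th := (theta nu omega).
Local Notation s := (Num.sqrt (nu * theta nu omega)).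
Hypotheses (M_pd : sym_posdef M) (K_pd : sym_posdef K) (nu_gt0 : 0 < nu)
  (alpha_gt0 : 0 < alpha) (c1_ge0 : 0 <= c1) (c2_ge0 : 0 <= c2)
  (M_le : forall l, spectrum M l -> hyp_ratio alpha (th * l) <= c1)
  (K_le : forall mu, spectrum K mu -> hyp_ratio alpha (s * mu) <= c2).

Lemma MBAS_eigenvalue_le z :
  eigenvalue (P_MBAS M K nu omega alpha) z -> ComplexField.Normc.normc z <= c1 * c2.
Proof.
have th_gt0 : 0 < th := theta_gt0 omega nu_gt0.
have s_gt0 : 0 < s by rewrite sqrtr_gt0 mulr_gt0.
have Q_adj := Rmx_adj m nu omega; have QQ := Rmx_sqr m omega nu_gt0.
have QH A := comm_Rmx_block_diag nu omega A.
rewrite /P_MBAS /H1 /H2 -scaleNr -(rmorphN (real_complex R)) => z_eig.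
have : z * z^* <= (c1 ^+ 2)%:C%C * (c2 ^+ 2)%:C%C.
  apply: (eigenvalue_chain_le _ _ _ _ _ _ _ z_eig) => [|||||x|x].
  - exact: scalar_plus_bdiag_unitmx.
  - exact: scalar_plus_bdiag_unitmx.
  - exact: comm_scalar_plus.
  - exact: comm_scalar_plus.
  - by rewrite ler0c sqr_ge0.
  - exact: dotmx_skew_bdiag_le.
  - by apply: dotmx_skew_bdiag_le; rewrite ?sqrrN.
have -> : z * z^* = ((ComplexField.Normc.normc z) ^+ 2)%:C%C.
  by rewrite -normCK normc_def rmorphXn; case: z {z_eig}.
by rewrite -!rmorphM lecR -exprMn ler_sqr ?nnegrE ?normc_ge0 ?mulr_ge0.
Qed.

Lemma spectral_radius_MBAS_le : (0 < m)%N ->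
  spectral_radius (P_MBAS M K nu omega alpha) <= c1 * c2.
Proof.
move=> m_gt0; apply: ge_sup => [|_ [z z_eig <-]]; last exact: MBAS_eigenvalue_le.
have [z z_eig] : exists z, eigenvalue (P_MBAS M K nu omega alpha) z.
  by apply: eigenvalue_closed; rewrite addn_gt0 m_gt0.
by exists (ComplexField.Normc.normc z), z.
Qed.

End MBASSpectralRadius.

Theorem mainTheorem4 (R : realType) (m : nat) (M K : 'M[R]_m) (nu omega : R)
  (lmin lmax mumin mumax : R) :
  sym_posdef M -> sym_posdef K -> 0 < nu -> 0 < omega ->
  spectrum M lmin -> spectrum M lmax ->
  (forall l, spectrum M l -> lmin <= l <= lmax) ->
  spectrum K mumin -> spectrum K mumax ->
  (forall mu, spectrum K mu -> mumin <= mu <= mumax) ->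
  let th := theta nu omega in
  let alpha1 := th * Num.sqrt (lmin * lmax) in
  let alpha2 := Num.sqrt (nu * th * mumin * mumax) in
  (0 < alpha1 /\ forall alpha, 0 < alpha -> chi M th alpha1 <= chi M th alpha) /\
  (0 < alpha2 /\ forall alpha, 0 < alpha -> vartheta K nu th alpha2 <= vartheta K nu th alpha) /\
  (forall alpha, 0 < alpha ->
     spectral_radius (P_MBAS M K nu omega alpha) <= chi M th alpha /\
     spectral_radius (P_MBAS M K nu omega alpha) <= vartheta K nu th alpha).
Proof.
move=> M_pd K_pd nu_gt0 _ Ml1 Ml2 Ml Km1 Km2 Km th alpha1 alpha2.
have th_gt0 : 0 < th := theta_gt0 omega nu_gt0.
have nuth_ge0 : 0 <= nu * th by rewrite mulr_ge0 // ltW.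
set s := Num.sqrt (nu * th); have s_gt0 : 0 < s by rewrite sqrtr_gt0 mulr_gt0.
have M_gt0 := spectrum_posdef_gt0 M_pd; have K_gt0 := spectrum_posdef_gt0 K_pd.
have alpha1E : alpha1 = Num.sqrt (th * lmin * (th * lmax)).
  by rewrite mulrACA -expr2 sqrtrM ?sqr_ge0 // sqrtr_sqr gtr0_norm.
have alpha2E : alpha2 = Num.sqrt (s * mumin * (s * mumax)).
  by rewrite mulrACA -expr2 sqr_sqrtr // mulrA.
rewrite alpha1E alpha2E; split; [|split].
- split=> [|a a_gt0]; last by rewrite !chiE; apply: hyp_ratio_sup_geomean.
  by rewrite sqrtr_gt0 !mulr_gt0 // M_gt0.
- split=> [|a a_gt0]; last by rewrite !varthetaE //; apply: hyp_ratio_sup_geomean.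
  by rewrite sqrtr_gt0 !mulr_gt0 // K_gt0.
move=> a a_gt0; rewrite chiE varthetaE //.
have M_ne0 : spectrum M !=set0 by exists lmin.
have K_ne0 : spectrum K !=set0 by exists mumin.
have rho_le := spectral_radius_MBAS_le M_pd K_pd nu_gt0 a_gt0
  (hyp_ratio_sup_ge0 th_gt0 M_gt0 a_gt0 M_ne0) (hyp_ratio_sup_ge0 s_gt0 K_gt0 a_gt0 K_ne0)
  (fun l => hyp_ratio_le_sup th_gt0 M_gt0 a_gt0) (fun mu => hyp_ratio_le_sup s_gt0 K_gt0 a_gt0)
  (spectrum_dim_gt0 Ml1).
split; apply: le_trans rho_le _.
  by rewrite ler_piMr ?hyp_ratio_sup_ge0 ?hyp_ratio_sup_le1.
by rewrite ler_piMl ?hyp_ratio_sup_ge0 ?hyp_ratio_sup_le1.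
Qed.
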